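(* Let $P$ be any school choice problem and let $G^{\mathrm{DA}(P)}$ be the envy digraph of the DA matching. A student $i \in I$ is unimprovable if and only if $i$ does not lie on any directed cycle of $G^{\mathrm{DA}(P)}$, i.e. there do not exist $k\ge 1$ and distinct students $i=i_0,i_1,\dots,i_k$ with edges $(i_0,i_1),(i_1,i_2),\dots,(i_{k-1},i_k),(i_k,i_0)$ in $G^{\mathrm{DA}(P)}$.
   Context: A school choice problem $P$ consists of a finite set of students $I$, a finite set of schools $S$ (possibly containing a null school $s_\emptyset$ of unlimited capacity), for each student $i$ a strict preference $\succ_i$ over $S$, and for each school $s$ a quota $q_s$ and a strict priority order $\triangleright_s$ over $I$. A matching $\mu:I\to S$ assigns at most $q_s$ students to each school $s$. Matching $\mu$ weakly Pareto-dominates $\nu$ if every student weakly prefers $\mu_i$ to $\nu_i$; it Pareto-dominates $\nu$ if in addition some student strictly prefers $\mu_j$ to $\nu_j$; a matching is Pareto-efficient if no matching Pareto-dominates it. $\mathrm{DA}(P)$ is the matching produced by the student-proposing deferred acceptance algorithm: in each round, every student not tentatively held applies to her most preferred school that has not yet rejected her; each school tentatively holds the highest-priority applicants (new and previously held) up to its quota and rejects the rest; the algorithm stops when a round has no new rejection. $\mathrm{DA}_i(P)$ is $i$'s assigned school. Let $\mathcal M(P)$ be the set of Pareto-efficient matchings that weakly Pareto-dominate $\mathrm{DA}(P)$. A student $i$ is unimprovable if $\mu_i=\mathrm{DA}_i(P)$ for every $\mu\in\mathcal M(P)$ (improvable otherwise). The envy digraph $G^{\mathrm{DA}(P)}$ has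 vertex set $I$ and a directed edge $(i,j)$ iff $i$ strictly prefers $\mathrm{DA}_j(P)$ to $\mathrm{DA}_i(P)$ (''$i$ envies $j$''). *)

From mathcomp Require Import all_boot.
Set Implicit Arguments. Unset Strict Implicit. Unset Printing Implicit Defensive.

(* School choice problem:
   - students     : finite type I
   - schools      : finite type S
   - pref i s     : rank of school s in student i's preference (smaller = better);
                    strictness = injectivity of pref i (assumed in the theorem)
   - prio s i     : rank of student i in school s's priority (smaller = higher
                    priority); strictness = injectivity of prio s
   - q s          : quota of school s (a null school of unlimited capacity is a
                    school with quota >= #|I|). *)

Section SchoolChoice.
Variables (I S : finType) (pref : I -> S -> nat) (prio : S -> I -> nat)
          (q : S -> nat).

Definition best (i : I) (R : {set S}) : option S :=
  [pick s | (s \notin R) && [forall t, (t \notin R) ==> (pref i s <= pref i t)]].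

(* state of DA: for each student, the set of schools that rejected her so far.
   In each round every student is (held at or applying to) her best school not
   yet rejecting her. *)
Definition applicants (R : {ffun I -> {set S}}) (s : S) : {set I} :=
  [set j | best j (R j) == Some s].

Definition rejected_by (R : {ffun I -> {set S}}) (s : S) (i : I) : bool :=
  (i \in applicants R s) &&
  (q s <= #|[set j in applicants R s | prio s j < prio s i]|).

Definition da_step (R : {ffun I -> {set S}}) : {ffun I -> {set S}} :=
  [ffun i => match best i (R i) with
             | Some s => if rejected_by R s i then s |: R i else R i
             | None => R i
             end].

(* every non-final round adds a rejection, and there are at most #|I|*#|S|
   rejections, so after this many rounds a round with no new rejection has
   been reached (and further rounds change nothing). *)
Definition da_rejections : {ffun I -> {set S}} :=
  iter (#|I| * #|S|).+1 da_step [ffun _ => set0].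

(* DA_i(P) (None would mean unassigned, impossible when total quota >= #|I|) *)
Definition DA (i : I) : option S := best i (da_rejections i).

Definition wpref (i : I) (a b : option S) : bool :=
  match a, b with
  | Some x, Some y => pref i x <= pref i y
  | _, None => true
  | None, Some _ => false
  end.

Definition matching (mu : I -> S) : Prop :=
  forall s, #|[set i | mu i == s]| <= q s.

Definition weakly_dominates (mu nu : I -> option S) : Prop :=
  forall i, wpref i (mu i) (nu i).

Definition dominates (mu nu : I -> option S) : Prop :=
  weakly_dominates mu nu /\ exists j, ~~ wpref j (nu j) (mu j).

Definition pareto_efficient (mu : I -> S) : Prop :=
  matching mu /\
  ~ exists nu : I -> S, matching nu /\
      dominates (fun i => Some (nu i)) (fun i => Some (mu i)).

Definition in_MP (mu : I -> S) : Prop :=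
  pareto_efficient mu /\ weakly_dominates (fun i => Some (mu i)) DA.

Definition unimprovable (i : I) : Prop :=
  forall mu : I -> S, in_MP mu -> Some (mu i) = DA i.

Definition envies (i j : I) : bool := ~~ wpref i (DA i) (DA j).

Definition on_envy_cycle (i : I) : Prop :=
  exists p : seq I, [&& p != [::], uniq (i :: p) & cycle envies (i :: p)].

End SchoolChoice.

From Pilot Require Import Defs.
From mathcomp Require Import all_boot.
Set Implicit Arguments. Unset Strict Implicit. Unset Printing Implicit Defensive.

(* If i lies on an envy cycle of DA, letting every student of the cycle take the
   school of the student she envies gives a matching weakly above DA; a
   Pareto-efficient matching above that one (any minimiser of the total
   preference rank) still improves i.  Conversely, suppose some mu in M(P) moves
   i.  Every student moved by mu (an improver) gets a school she prefers to her
   DA school; that school rejected her during DA and is therefore full under DA,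
   so at each school the improvers arriving under mu are at most the improvers
   leaving it.  Pairing arrivals with departures school by school gives an
   injection f of the improvers into themselves with each j envying f j, and
   the f-orbit of i is an envy cycle through i. *)


Lemma ltn_sum_pointwise (T : finType) (F G : T -> nat) (j0 : T) :
  (forall j, F j <= G j) -> F j0 < G j0 -> \sum_j F j < \sum_j G j.
Proof.
move=> leFG ltFG0; rewrite (bigD1 j0) //= [X in _ < X](bigD1 j0) //= -addSn.
by apply: leq_add => //; apply: leq_sum => j _.
Qed.

Lemma sum_card_fibers_Some (T U : finType) (l : T -> option U) :
  \sum_u #|[set x | l x == Some u]| = \sum_x (l x != None).
Proof.
under eq_bigr => u _ do rewrite -sum1dep_card big_mkcond /=.
rewrite exchange_big /=; apply: eq_bigr => x _.
case: (l x) => [u|]; last by rewrite big1.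
rewrite (bigD1 u) //= eqxx big1 // => v /negbTE neq_vu.
by rewrite (inj_eq (@Some_inj _)) eq_sym neq_vu.
Qed.

Section Transfer.
Variable T : finType.

Definition set_transfer (A B : {set T}) (x : T) : T :=
  nth x (enum B) (index x (enum A)).

Variables (A B : {set T}).
Hypothesis leAB : #|A| <= #|B|.

Lemma set_transfer_index_lt x : x \in A -> index x (enum A) < size (enum B).
Proof. by move=> xA; rewrite -cardE (leq_trans _ leAB) // cardE index_mem mem_enum. Qed.

Lemma set_transfer_mem x : x \in A -> set_transfer A B x \in B.
Proof. by move=> xA; rewrite -mem_enum mem_nth // set_transfer_index_lt. Qed.

Lemma set_transfer_inj : {in A &, injective (set_transfer A B)}.
Proof.
move=> x y xA yA; rewrite /set_transfer (set_nth_default y) ?set_transfer_index_lt //.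
move/eqP; rewrite nth_uniq ?enum_uniq ?set_transfer_index_lt // => /eqP eq_idx.
by rewrite -(nth_index x (_ : x \in enum A)) ?mem_enum // eq_idx nth_index ?mem_enum.
Qed.

End Transfer.

Lemma labelled_transfer (T : finType) (L : eqType) (J : {set T}) (l1 l2 : T -> L) :
  (forall s, #|[set j in J | l1 j == s]| <= #|[set k in J | l2 k == s]|) ->
  exists f : T -> T, [/\ {homo f : x / x \in J}, {in J &, injective f}
                       & {in J, forall j, l2 (f j) = l1 j}].
Proof.
pose A s := [set j in J | l1 j == s]; pose B s := [set k in J | l2 k == s].
move=> leAB; pose f j := set_transfer (A (l1 j)) (B (l1 j)) j.
have jA j : j \in J -> j \in A (l1 j) by move=> jJ; rewrite inE jJ eqxx.
have fB j : j \in J -> f j \in B (l1 j) by move/jA; exact: set_transfer_mem (leAB (l1 j)) j.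
have fJ j : j \in J -> f j \in J by move/fB; rewrite inE => /andP[].
have fl j : j \in J -> l2 (f j) = l1 j by move/fB; rewrite inE => /andP[_ /eqP].
exists f; split=> // j k jJ kJ eq_f.
have eq_l : l1 j = l1 k by rewrite -fl // eq_f fl.
move: eq_f; rewrite /f eq_l; apply: (set_transfer_inj (leAB _)).
  by rewrite -eq_l jA.
exact: jA.
Qed.

Lemma fcycle_through (T : finType) (f : T -> T) (J : {pred T}) (r : rel T) (i : T) :
  {homo f : x / x \in J} -> {in J &, injective f} -> {in J, forall x, r x (f x)} ->
  i \in J -> f i != i ->
  exists p, [&& p != [::], uniq (i :: p) & cycle r (i :: p)].
Proof.
move=> fJ f_inj r_f iJ fi_neq.
have orbitJ : all [in J] (orbit f i).
  by apply/allP => _ /trajectP[m _ ->]; elim: m => //= m; apply: fJ.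
move: orbitJ (orbit_uniq f i) (cycle_orbit_in fJ f_inj iJ).
rewrite /orbit; case: (order f i) (order_gt0 f i) => [//|[|n] _].
  by move=> _ _ /= /andP[/eqP fi_eq _]; rewrite fi_eq eqxx in fi_neq.
move=> orbitJ uniq_orb cyc_orb; exists (traject f (f i) n.+1); apply/and3P; split=> //.
by apply: (sub_in_cycle (P := J)) cyc_orb => // x y xJ _ /eqP <-; apply: r_f.
Qed.

Section DeferredAcceptance.
Variables (I S : finType) (pref : I -> S -> nat) (prio : S -> I -> nat) (q : S -> nat).
Implicit Types (R : {ffun I -> {set S}}) (j k : I) (s t : S).

Local Notation best := (best pref).
Local Notation applicants := (applicants pref).
Local Notation rejected_by := (rejected_by pref prio q).
Local Notation da_step := (da_step pref prio q).
Local Notation da_rejections := (da_rejections pref prio q).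
Local Notation DA := (DA pref prio q).

Lemma best_Some j (R : {set S}) s : best j R = Some s ->
  s \notin R /\ forall t, t \notin R -> pref j s <= pref j t.
Proof.
rewrite /Defs.best; case: pickP => // x /andP[xR /forallP x_min] [<-].
by split=> // t tR; apply: (implyP (x_min t)).
Qed.

Lemma best_None j (R : {set S}) : best j R = None -> forall s, s \in R.
Proof.
rewrite /Defs.best; case: pickP => // no_best _ s; apply/negPn/negP => sR.
have [t tR t_min] := @arg_minnP _ s (fun t => t \notin R) (pref j) sR.
move: (no_best t); rewrite tR /= => /negP; apply; apply/forallP => u.
by apply/implyP => uR; apply: t_min.
Qed.

Lemma da_step_subset R j : R j \subset da_step R j.
Proof.
rewrite /Defs.da_step ffunE; case: (best j (R j)) => [s|] //.
by case: ifP => _ //; apply: subsetUr.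
Qed.

Definition rejection_count (R : {ffun I -> {set S}}) := \sum_j #|R j|.

Lemma rejection_count_step R :
  da_step R != R -> rejection_count R < rejection_count (da_step R).
Proof.
move=> changed; have [j changed_j] : exists j, da_step R j != R j.
  apply/existsP; apply: contraR changed => /existsPn same.
  by apply/eqP/ffunP => j; apply/eqP/negPn/same.
apply: (@ltn_sum_pointwise _ _ _ j) => [k|]; first exact/subset_leq_card/da_step_subset.
by apply: proper_card; rewrite properEneq eq_sym changed_j da_step_subset.
Qed.

Lemma rejection_count_max R : rejection_count R <= #|I| * #|S|.
Proof.
rewrite -sum_nat_const; apply: leq_sum => j _; exact: max_card.
Qed.

Lemma iter_da_step_stable_or_count n :
  let R := iter n da_step [ffun _ => set0] in da_step R = R \/ n <= rejection_count R.
Proof.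
elim: n => [|n IHn] /=; first by right.
set R := iter n da_step _ in IHn *.
have [stable|unstable] := eqVneq (da_step R) R; first by left; rewrite !stable.
case: IHn => [stable|le_n_count]; first by rewrite stable eqxx in unstable.
by right; apply: leq_ltn_trans le_n_count (rejection_count_step unstable).
Qed.

Lemma da_rejections_stable : da_step da_rejections = da_rejections.
Proof.
case: (iter_da_step_stable_or_count (#|I| * #|S|).+1) => // too_many.
have := rejection_count_max (iter (#|I| * #|S|).+1 da_step [ffun _ => set0]).
by rewrite leqNgt too_many.
Qed.

Definition rejecting_schools_full R :=
  forall s j, s \in R j -> q s <= #|applicants R s|.

Lemma full_after_da_step R s :
  q s <= #|applicants R s| -> q s <= #|applicants (da_step R) s|.
Proof.
move=> full; set A := applicants R s; set K := [set k in A | ~~ rejected_by R s k].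
have K_stay : K \subset applicants (da_step R) s.
  apply/subsetP => k; rewrite !inE => /andP[/eqP best_k kept].
  by rewrite /Defs.da_step ffunE best_k (negbTE kept) best_k.
apply: (leq_trans _ (subset_leq_card K_stay)); rewrite leqNgt; apply/negP => small_K.
have /subsetPn[k kA kK] : ~~ (A \subset K).
  by apply/negP => /subset_leq_card; rewrite leqNgt (leq_trans small_K full).
(* the rejected applicant of highest priority has only kept applicants above her *)
have [k0 /andP[k0A k0K] k0_min] :=
  @arg_minnP _ k (fun x => (x \in A) && (x \notin K)) (prio s) (introT andP (conj kA kK)).
have /andP[_ many_above] : rejected_by R s k0 by move: k0K; rewrite inE k0A negbK.
have above_kept : [set j in A | prio s j < prio s k0] \subset K.
  apply/subsetP => j; rewrite inE => /andP[jA lt_j_k0]; apply/negPn/negP => jK.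
  by have := k0_min j; rewrite jA jK leqNgt lt_j_k0 => /(_ isT).
by have := leq_trans many_above (subset_leq_card above_kept); rewrite leqNgt small_K.
Qed.

Lemma rejecting_schools_full_step R :
  rejecting_schools_full R -> rejecting_schools_full (da_step R).
Proof.
move=> fullR s j; case sR: (s \in R j); first by move=> _; apply/full_after_da_step/(fullR s j).
rewrite /Defs.da_step ffunE; case: (best j (R j)) => [t|]; last by rewrite sR.
case: ifP => [/andP[_ many_above] | _]; last by rewrite sR.
rewrite !inE sR orbF => /eqP ->; apply/full_after_da_step/(leq_trans many_above).
by apply/subset_leq_card/subsetP => x; rewrite inE => /andP[].
Qed.

Lemma da_rejections_full : rejecting_schools_full da_rejections.
Proof.
rewrite /Defs.da_rejections; elim: (#|I| * #|S|).+1 => [|n IHn] /=.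
  by move=> s j; rewrite ffunE inE.
exact: rejecting_schools_full_step.
Qed.

Lemma da_rejections_kept j s :
  best j (da_rejections j) = Some s -> ~~ rejected_by da_rejections s j.
Proof.
move=> best_j; apply/negP => rej.
have := congr1 (fun R : {ffun I -> {set S}} => R j) da_rejections_stable.
rewrite /= {1}/Defs.da_step ffunE best_j rej => stable_j.
by have [] := best_Some best_j; rewrite -stable_j !inE eqxx.
Qed.

Section Quotas.
Hypothesis prio_strict : forall s, injective (prio s).

Lemma da_applicants_quota s : #|applicants da_rejections s| <= q s.
Proof.
rewrite leqNgt; apply/negP => over.
have /card_gt0P[k kA] : 0 < #|applicants da_rejections s| by apply: leq_ltn_trans over.
have [k1 k1A k1_max] := @arg_maxnP _ k (fun x => x \in applicants da_rejections s) (prio s) kA.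
have : ~~ rejected_by da_rejections s k1.
  by apply: da_rejections_kept; move: k1A; rewrite inE => /eqP.
rewrite /Defs.rejected_by k1A -ltnNge => few_above.
have others_above : applicants da_rejections s :\ k1
    \subset [set j in applicants da_rejections s | prio s j < prio s k1].
  apply/subsetP => x; rewrite in_setD1 inE => /andP[x_neq xA].
  rewrite xA ltn_neqAle (k1_max x xA : prio s x <= prio s k1) andbT.
  by apply: contra x_neq => /eqP /prio_strict ->.
move: over; rewrite (cardsD1 k1) k1A add1n ltnS => over.
by have := subset_leq_card others_above; rewrite leqNgt (leq_trans few_above over).
Qed.

End Quotas.

Section Seats.
Hypothesis enough_seats : #|I| <= \sum_s q s.

Lemma DA_Some j : exists s, DA j = Some s.
Proof.
rewrite /Defs.DA; case best_j: (best j (da_rejections j)) => [s|]; first by exists s.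
have fully_booked : \sum_s q s <= \sum_k (best k (da_rejections k) != None).
  rewrite -(sum_card_fibers_Some (fun k => best k (da_rejections k))).
  by apply: leq_sum => s _; apply: (da_rejections_full (best_None best_j s)).
have assigned : \sum_k (best k (da_rejections k) != None) <= #|I|.-1.
  rewrite (bigD1 j) //= best_j add0n -(cardC1 j) -sum1_card.
  by apply: leq_sum => k _; case: (_ != _).
have nonempty : 0 < #|I| by apply/card_gt0P; exists j.
move: nonempty (leq_trans enough_seats (leq_trans fully_booked assigned)).
by case: #|I| => // m _; rewrite ltnn.
Qed.

End Seats.

End DeferredAcceptance.

Lemma pareto_efficient_above (I S : finType) (pref : I -> S -> nat) (q : S -> nat)
    (nu : I -> S) :
  matching q nu ->
  exists2 mu : I -> S, pareto_efficient pref q mu & forall j, pref j (mu j) <= pref j (nu j).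
Proof.
move=> nu_matching.
pose ok (f : {ffun I -> S}) :=
  [forall s, #|[set j | f j == s]| <= q s] && [forall j, pref j (f j) <= pref j (nu j)].
have ok_ffun (g : I -> S) : matching q g -> (forall j, pref j (g j) <= pref j (nu j)) ->
    ok [ffun j => g j].
  move=> g_matching g_above; apply/andP; split; apply/forallP => x; rewrite ?ffunE //.
  by apply: leq_trans (g_matching x); apply/subset_leq_card/subsetP => j; rewrite !inE ffunE.
(* a minimiser of the total preference rank is Pareto efficient *)
have [f /andP[/forallP f_matching /forallP f_above] f_min] :=
  @arg_minnP _ _ ok (fun f => \sum_j pref j (f j)) (ok_ffun nu nu_matching (fun j => leqnn _)).
exists (fun j => f j) => //; split=> // -[g [g_matching [g_weak [j0 g_strict]]]].
have ok_g : ok [ffun j => g j].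
  by apply: ok_ffun => // j; apply: leq_trans (g_weak j) (f_above j).
have := f_min _ ok_g; rewrite leqNgt => /negP; apply.
apply: (@ltn_sum_pointwise _ _ _ j0) => [j|]; rewrite ffunE; first exact: (g_weak j).
by move: g_strict; rewrite /= -ltnNge.
Qed.

Section EnvyCycles.
Variables (I S : finType) (pref : I -> S -> nat) (prio : S -> I -> nat) (q : S -> nat).
Hypothesis pref_strict : forall i, injective (pref i).
Hypothesis prio_strict : forall s, injective (prio s).
Variable da : I -> S.
Hypothesis DA_da : forall j, DA pref prio q j = Some (da j).

Local Notation envies := (envies pref prio q).

Lemma da_matching : matching q da.
Proof.
move=> s; apply: leq_trans (da_applicants_quota pref q prio_strict s).
by apply/subset_leq_card/subsetP => j; rewrite !inE -/(DA pref prio q j) DA_da.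
Qed.

(* a school preferred to the DA school rejected the student, so it is full *)
Lemma da_preferred_full j s : pref j s < pref j (da j) -> q s <= #|[set k | da k == s]|.
Proof.
move=> lt_s_da; have [_ da_min] := best_Some (DA_da j).
case sR: (s \in da_rejections pref prio q j).
  2: by move: (da_min s (negbT sR)); rewrite leqNgt lt_s_da.
apply: (leq_trans (da_rejections_full sR)); apply/subset_leq_card/subsetP => k.
by rewrite !inE -/(DA pref prio q k) DA_da.
Qed.

Lemma enviesE j k : envies j k = (pref j (da k) < pref j (da j)).
Proof. by rewrite /Defs.envies !DA_da /= ltnNge. Qed.

Lemma envy_cycle_improvable i :
  on_envy_cycle pref prio q i -> ~ unimprovable pref prio q i.
Proof.
move=> [p /and3P[_ uniq_c cycle_c]] unimp; set c := i :: p.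
have next_inj : injective (next c) by apply: can_inj (prev_next uniq_c).
have envy_next j : j \in c -> envies j (next c j) by apply: next_cycle.
have next_above j : pref j (da (next c j)) <= pref j (da j).
  by case jc: (j \in c); [rewrite ltnW // -enviesE envy_next | rewrite next_nth jc].
have rotated_matching : matching q (da \o next c).
  move=> s; rewrite (_ : [set j | _] = next c @^-1: [set k | da k == s]).
    by rewrite card_preimset //; apply: da_matching.
  by apply/setP => j; rewrite !inE.
have [mu mu_pareto mu_above] := pareto_efficient_above pref rotated_matching.
have mu_in_MP : in_MP pref prio q mu.
  by split=> // j; rewrite DA_da /=; apply: leq_trans (mu_above j) (next_above j).
have := unimp mu mu_in_MP; rewrite DA_da => -[mu_i].
have := envy_next i (mem_head i p); rewrite enviesE => /(leq_ltn_trans (mu_above i)).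
by rewrite mu_i ltnn.
Qed.

Section Improvers.
Variable mu : I -> S.
Hypothesis mu_matching : matching q mu.
Hypothesis mu_above : weakly_dominates pref (fun j => Some (mu j)) (DA pref prio q).

Definition improvers := [set j | mu j != da j].

Lemma improvers_improve j : j \in improvers -> pref j (mu j) < pref j (da j).
Proof.
rewrite inE => neq; have := mu_above j; rewrite DA_da /= leq_eqVlt.
by case/orP => [/eqP/pref_strict eq_mu|//]; rewrite eq_mu eqxx in neq.
Qed.

(* improvers only take seats vacated by improvers, since their new schools are
   full under DA *)
Lemma improvers_seats s :
  #|[set j in improvers | mu j == s]| <= #|[set k in improvers | da k == s]|.
Proof.
set A := [set j in _ | _]; set B := [set k in _ | _].
have [-> | [j jA]] := set_0Vmem A; first by rewrite cards0.
move: jA; rewrite inE => /andP[j_impr /eqP mu_j].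
have full := da_preferred_full (improvers_improve j_impr); rewrite mu_j in full.
set D := [set k | da k == s] in full; set C := D :\: B.
have disjoint_AC : A :&: C = set0.
  apply/setP => k; rewrite !inE; apply/negP => /and3P[/andP[k_impr _] kB kD].
  by rewrite k_impr kD in kB.
have AC_at_s : A :|: C \subset [set k | mu k == s].
  apply/subsetP => k; rewrite !inE => /orP[/andP[_ ->] // | /andP[kB kD]].
  by move: kB; rewrite kD andbT negbK => /eqP ->.
have card_D : #|D| = #|B| + #|C|.
  rewrite -(cardsID B D) (setIidPr _) //.
  by apply/subsetP => k; rewrite !inE => /andP[_ ->].
have := subset_leq_card AC_at_s; rewrite cardsU disjoint_AC cards0 subn0 => le_AC.
by rewrite -(leq_add2r #|C|) -card_D (leq_trans le_AC) // (leq_trans (mu_matching s)).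
Qed.

End Improvers.

Lemma no_envy_cycle_unimprovable i :
  ~ on_envy_cycle pref prio q i -> unimprovable pref prio q i.
Proof.
move=> no_cycle mu [[mu_matching _] mu_above]; rewrite DA_da; congr Some.
apply/eqP/negPn/negP => mu_i; apply: no_cycle.
have i_impr : i \in improvers mu by rewrite inE.
have [f [f_impr f_inj da_f]] := labelled_transfer (improvers_seats mu_matching mu_above).
apply: (fcycle_through f_impr f_inj) => // [j j_impr|].
  by rewrite enviesE da_f //; apply: improvers_improve.
by apply: contra mu_i => /eqP fi; rewrite -da_f // fi.
Qed.

End EnvyCycles.

Theorem proposition1 (I S : finType) (pref : I -> S -> nat)
  (prio : S -> I -> nat) (q : S -> nat)
  (pref_strict : forall i, injective (pref i))
  (prio_strict : forall s, injective (prio s))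
  (enough_seats : #|I| <= \sum_(s : S) q s)
  (i : I) :
  unimprovable pref prio q i <-> ~ on_envy_cycle pref prio q i.
Proof.
have [s0 _] := DA_Some pref prio enough_seats i.
pose da j := odflt s0 (DA pref prio q j).
have DA_da j : DA pref prio q j = Some (da j).
  by rewrite /da; have [t ->] := DA_Some pref prio enough_seats j.
split=> [unimp cyc | ]; last exact: no_envy_cycle_unimprovable.
exact: envy_cycle_improvable DA_da i cyc unimp.
Qed.
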